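(* Let $c>0$, let $\widetilde{\theta_c}$ be as in the context, and let $X:\mathbb{C}\to\widetilde{E(2)}$ be the map described in the context with $\theta=\widetilde{\theta_c}$. Then there exists $Z\in\mathbb{C}\setminus\{0\}$ such that $X(z+Z)=X(z)$ for all $z\in\mathbb{C}$.
   Context: $\widetilde{E(2)}$ is $\mathbb{R}^3$ with coordinates $(x_1,x_2,x_3)$ and group law $(a_1,b_1,c_1)*(a_2,b_2,c_2)=(a_1+a_2\cos c_1-b_2\sin c_1,\ b_1+a_2\sin c_1+b_2\cos c_1,\ c_1+c_2)$, with the left-invariant metric $\lambda_1^2(\cos x_3\,dx_1+\sin x_3\,dx_2)^2+\lambda_2^2(-\sin x_3\,dx_1+\cos x_3\,dx_2)^2+\frac{1}{\lambda_1^2\lambda_2^2}dx_3^2$, where either $\lambda_1>\lambda_2>0$ or $\lambda_1=\lambda_2=1$. For $c>0$: $\theta_c^+=\pi$ if $c>\sqrt2\lambda_1$, $\theta_c^+=\arccos(1-c^2/\lambda_1^2)$ if $0<c\le\sqrt2\lambda_1$; $\Omega=\{(c,\theta):c>0,\ |\theta|<\theta_c^+\}$. For $(c,\theta)\in\Omega$: $D=\sin\theta/c$; $\varphi$ is the global solution of $\varphi'(u)=\sqrt{c^2+2\cos\theta\,B(u)-D^2B(u)^2}$, $\varphi(0)=0$, with $B(u)=\lambda_1^2\cos^2\varphi(u)+\lambda_2^2\sin^2\varphi(u)$ ($\varphi$ is an increasing bijection of $\mathbb{R}$); $U>0$ is the unique number with $\varphi(U)=\pi$; $f$ solves $f'=DB$,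 $f(0)=0$; $G(u)=\int_0^u\frac{c-\varphi'(s)}{B(s)}ds$; $H(c,\theta)=Df(U)+cG(U)$. For each $c>0$, $\widetilde{\theta_c}$ denotes the unique $\theta\in(0,\pi/2)\cap(0,\theta_c^+)$ with $H(c,\theta)=0$. The map $X=(x_1,x_2,x_3)$ is: $x_3(u+iv)=-\lambda_1\lambda_2Dv+\lambda_1\lambda_2G(u)$; with $A=f(u)+cv$, $M_1=c\cos x_3\cosh A-\lambda_1\lambda_2D\sin x_3\sinh A$, $M_2=c\cos x_3\sinh A-\lambda_1\lambda_2D\sin x_3\cosh A$, $M_3=c\sin x_3\sinh A+\lambda_1\lambda_2D\cos x_3\cosh A$, $M_4=c\sin x_3\cosh A+\lambda_1\lambda_2D\cos x_3\sinh A$, $x_1=-\frac{1}{(c^2+\lambda_1^2\lambda_2^2D^2)B}[\frac{1}{\lambda_1}f'\cos\varphi\,M_1-\frac{1}{\lambda_1}(c-\varphi')\sin\varphi\,M_2-\frac{1}{\lambda_2}(c-\varphi')\cos\varphi\,M_3-\frac{1}{\lambda_2}f'\sin\varphi\,M_4]$, $x_2=-\frac{1}{(c^2+\lambda_1^2\lambda_2^2D^2)B}[\frac{1}{\lambda_1}f'\cos\varphi\,M_4-\frac{1}{\lambda_1}(c-\varphi')\sin\varphi\,M_3+\frac{1}{\lambda_2}(c-\varphi')\cos\varphi\,M_2+\frac{1}{\lambda_2}f'\sin\varphi\,M_1]$, all functions of $u$ evaluated at $u$. (It is a conformal minimal immersion.) *)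

From Stdlib Require Import Reals Lra.
From Coquelicot Require Import Coquelicot.
Open Scope R_scope.

Definition theta_plus (l1 c : R) : R :=
  if Rlt_dec (sqrt 2 * l1) c then PI else acos (1 - c ^ 2 / l1 ^ 2).

Definition Dc (c th : R) : R := sin th / c.

Definition Bf (l1 l2 : R) (phi : R -> R) (u : R) : R :=
  l1 ^ 2 * (cos (phi u)) ^ 2 + l2 ^ 2 * (sin (phi u)) ^ 2.

Definition phid (l1 l2 c th : R) (phi : R -> R) (u : R) : R :=
  sqrt (c ^ 2 + 2 * cos th * Bf l1 l2 phi u - (Dc c th) ^ 2 * (Bf l1 l2 phi u) ^ 2).

Definition is_phi (l1 l2 c th : R) (phi : R -> R) : Prop :=
  phi 0 = 0 /\ forall u, is_derive phi u (phid l1 l2 c th phi u).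

Definition ff (l1 l2 c th : R) (phi : R -> R) (u : R) : R :=
  RInt (fun s => Dc c th * Bf l1 l2 phi s) 0 u.

Definition ffd (l1 l2 c th : R) (phi : R -> R) (u : R) : R :=
  Dc c th * Bf l1 l2 phi u.

Definition GG (l1 l2 c th : R) (phi : R -> R) (u : R) : R :=
  RInt (fun s => (c - phid l1 l2 c th phi s) / Bf l1 l2 phi s) 0 u.

Definition HH (l1 l2 c th : R) (phi : R -> R) (U : R) : R :=
  Dc c th * ff l1 l2 c th phi U + c * GG l1 l2 c th phi U.

Definition Xmap (l1 l2 c th : R) (phi : R -> R) (z : C) : R * R * R :=
  let u := fst z in
  let v := snd z in
  let D := Dc c th in
  let x3 := - l1 * l2 * D * v + l1 * l2 * GG l1 l2 c th phi u in
  let A := ff l1 l2 c th phi u + c * v in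
  let M1 := c * cos x3 * cosh A - l1 * l2 * D * sin x3 * sinh A in
  let M2 := c * cos x3 * sinh A - l1 * l2 * D * sin x3 * cosh A in
  let M3 := c * sin x3 * sinh A + l1 * l2 * D * cos x3 * cosh A in
  let M4 := c * sin x3 * cosh A + l1 * l2 * D * cos x3 * sinh A in
  let B := Bf l1 l2 phi u in
  let fd := ffd l1 l2 c th phi u in
  let pd := phid l1 l2 c th phi u in
  let ph := phi u in
  let k := - (1 / ((c ^ 2 + l1 ^ 2 * l2 ^ 2 * D ^ 2) * B)) in
  let x1 := k * ( (1 / l1) * fd * cos ph * M1
                - (1 / l1) * (c - pd) * sin ph * M2
                - (1 / l2) * (c - pd) * cos ph * M3
                - (1 / l2) * fd * sin ph * M4) in
  let x2 := k * ( (1 / l1) * fd * cos ph * M4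
                - (1 / l1) * (c - pd) * sin ph * M3
                + (1 / l2) * (c - pd) * cos ph * M2
                + (1 / l2) * fd * sin ph * M1) in
  (x1, x2, x3).

From Stdlib Require Import Reals Lra.
From Coquelicot Require Import Coquelicot.
Open Scope R_scope.

(* The angle function solves the autonomous ODE phi' = F(phi) with F positive and
   pi-periodic (B only involves cos^2 and sin^2), so uniqueness of solutions and
   phi(U) = pi give phi(u + U) = phi(u) + pi.  Hence B and phi' are U-periodic,
   while f and G gain the constants f(U), G(U) over each period.  Shifting u by 2U
   leaves cos phi, sin phi unchanged and adds 2 f(U) to A and 2 l1 l2 G(U) to x3;
   the shift v -> v - 2 f(U)/c restores A and changes x3 by (2 l1 l2 / c) H(c, theta),
   which vanishes.  So Z = 2U - 2i f(U)/c is a period of X. *)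
Lemma eq_of_is_derive_0 (h : R -> R) :
  (forall t, is_derive h t 0) -> forall a b, h a = h b.
Proof.
  intros Hh a b.
  destruct (Rtotal_order a b) as [Hab | [-> | Hba]].
  - apply eq_is_derive; auto.
  - reflexivity.
  - symmetry; apply eq_is_derive; auto.
Qed.

Lemma is_derive_RInt_0 (g : R -> R) :
  (forall x, continuous g x) -> forall x, is_derive (RInt g 0) x (g x).
Proof.
  intros Hg x. apply is_derive_RInt with (a := 0); auto.
  apply filter_forall. intro b.
  apply RInt_correct, ex_RInt_continuous. auto.
Qed.

Lemma is_derive_pos_injective (h h' : R -> R) :
  (forall x, is_derive h x (h' x)) -> (forall x, 0 < h' x) ->
  forall a b, h a = h b -> a = b.
Proof.
  intros Hh Hpos a b Hab.
  assert (Hlt : forall x y, x < y -> h x < h y).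
  { intros x y Hxy. apply (incr_function h m_infty p_infty h'); simpl; auto; intros; apply Hpos. }
  destruct (Rtotal_order a b) as [H | [H | H]]; auto;
    apply Hlt in H; lra.
Qed.

Lemma RInt_0_add_period (g : R -> R) (P : R) :
  (forall x, continuous g x) -> (forall s, g (s + P) = g s) ->
  forall u, RInt g 0 (u + P) = RInt g 0 u + RInt g 0 P.
Proof.
  intros Hg HP u.
  assert (Hex : forall a b, ex_RInt g a b)
    by (intros; apply (ex_RInt_continuous (V := R_CompleteNormedModule)); auto).
  assert (Hshift : RInt g 0 u = RInt g P (u + P)).
  { pose proof (RInt_comp_lin g 1 P 0 u (Hex _ _)) as Hlin.
    replace (1 * 0 + P) with P in Hlin by ring.
    replace (1 * u + P) with (u + P) in Hlin by ring.
    rewrite <- Hlin. apply RInt_ext. intros y _.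
    rewrite !Rmult_1_l, HP. reflexivity. }
  rewrite Hshift, <- (RInt_Chasles g 0 P (u + P)) by auto.
  apply Rplus_comm.
Qed.

Section AutonomousODE.

Variable F : R -> R.
Hypothesis F_pos : forall p, 0 < F p.
Hypothesis F_continuous : forall p, continuous F p.

Lemma autonomous_ode_unique (y1 y2 : R -> R) :
  (forall u, is_derive y1 u (F (y1 u))) -> (forall u, is_derive y2 u (F (y2 u))) ->
  y1 0 = y2 0 -> forall u, y1 u = y2 u.
Proof.
  intros Hy1 Hy2 H0.
  (* [Phi] straightens the flow: since [Phi' = 1 / F], [Phi (y u) - u] is constant along solutions. *)
  set (Phi := RInt (fun t => / F t) 0).
  assert (HPhi : forall x, is_derive Phi x (/ F x)).
  { apply is_derive_RInt_0. intro x.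
    apply continuous_Rinv_comp; [apply F_continuous | apply Rgt_not_eq, F_pos]. }
  assert (Htime : forall y : R -> R, (forall u, is_derive y u (F (y u))) ->
            forall u, Phi (y u) - u = Phi (y 0) - 0).
  { intros y Hy u. apply (eq_of_is_derive_0 (fun u => Phi (y u) - u)). intro t.
    replace 0 with (minus (scal (F (y t)) (/ F (y t))) one).
    - apply (is_derive_minus (fun u => Phi (y u)) (fun u => u)).
      + apply (is_derive_comp Phi y); [apply HPhi | apply Hy].
      + apply (is_derive_id (K := R_AbsRing)).
    - unfold minus, plus, opp, scal, one; simpl. unfold mult; simpl.
      field. apply Rgt_not_eq, F_pos. }
  intro u. apply (is_derive_pos_injective Phi (fun x => / F x)); auto.
  - intro x. apply Rinv_0_lt_compat, F_pos.
  - pose proof (Htime y1 Hy1 u). pose proof (Htime y2 Hy2 u). rewrite H0 in *. lra.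
Qed.

Lemma autonomous_ode_shift (P T : R) (y : R -> R) :
  (forall p, F (p + P) = F p) -> (forall u, is_derive y u (F (y u))) ->
  y T = y 0 + P -> forall u, y (u + T) = y u + P.
Proof.
  intros HFP Hy HT u.
  enough (y (u + T) - P = y u) by lra.
  apply (autonomous_ode_unique (fun u => y (u + T) - P)); auto.
  - intro t.
    replace (F (y (t + T) - P)) with (F (y (t + T)))
      by (rewrite <- (HFP (y (t + T) - P)); f_equal; ring).
    pose proof (Hy (t + T)) as Hyt.
    auto_derive.
    + eexists; exact Hyt.
    + rewrite Rmult_1_l. apply is_derive_unique, Hyt.
  - rewrite Rplus_0_l, HT. ring.
Qed.

End AutonomousODE.

(* [Bf l1 l2 phi u] and [phid l1 l2 c th phi u] depend on [u] only through the angle [phi u]. *)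
Definition B_angle (l1 l2 p : R) : R := l1 ^ 2 * cos p ^ 2 + l2 ^ 2 * sin p ^ 2.

Definition Q_angle (l1 l2 c th p : R) : R :=
  c ^ 2 + 2 * cos th * B_angle l1 l2 p - Dc c th ^ 2 * B_angle l1 l2 p ^ 2.

Definition phid_angle (l1 l2 c th p : R) : R := sqrt (Q_angle l1 l2 c th p).

Lemma B_angle_add_PI l1 l2 p : B_angle l1 l2 (p + PI) = B_angle l1 l2 p.
Proof. unfold B_angle. rewrite neg_cos, neg_sin. ring. Qed.

Lemma phid_angle_add_PI l1 l2 c th p :
  phid_angle l1 l2 c th (p + PI) = phid_angle l1 l2 c th p.
Proof. unfold phid_angle, Q_angle. rewrite B_angle_add_PI. reflexivity. Qed.

Lemma B_angle_bounds l1 l2 p :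
  0 < l2 -> l2 ^ 2 <= l1 ^ 2 -> 0 < B_angle l1 l2 p <= l1 ^ 2.
Proof.
  intros Hl2 Hl12. unfold B_angle.
  pose proof (sin2_cos2 p) as Hp. unfold Rsqr in Hp.
  pose proof (pow2_ge_0 (cos p)). pose proof (pow2_ge_0 (sin p)).
  split; nra.
Qed.

Lemma Q_angle_factor l1 l2 c th p : c <> 0 ->
  Q_angle l1 l2 c th p * c ^ 2 =
  (c ^ 2 - (1 - cos th) * B_angle l1 l2 p) * (c ^ 2 + (1 + cos th) * B_angle l1 l2 p).
Proof.
  intro Hc. unfold Q_angle, Dc.
  pose proof (sin2_cos2 th) as Hth. unfold Rsqr in Hth.
  unfold Rdiv. rewrite Rpow_mult_distr, pow_inv.
  replace (sin th ^ 2) with (1 - cos th ^ 2) by (simpl; lra).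
  field. auto.
Qed.

Lemma Q_angle_pos l1 l2 c th p :
  c <> 0 -> 0 < l2 -> l2 ^ 2 <= l1 ^ 2 -> l1 ^ 2 * (1 - cos th) < c ^ 2 ->
  0 < Q_angle l1 l2 c th p.
Proof.
  intros Hc Hl2 Hl12 Hcone.
  destruct (B_angle_bounds l1 l2 p Hl2 Hl12) as [HB0 HB1].
  pose proof (COS_bound th) as Hcos.
  assert (Hc2 : 0 < c ^ 2) by (apply pow2_gt_0; auto).
  assert (0 < Q_angle l1 l2 c th p * c ^ 2); [ | nra].
  rewrite Q_angle_factor by auto.
  apply Rmult_lt_0_compat; nra.
Qed.

Lemma theta_plus_bound l1 c th :
  0 < l1 -> 0 <= c -> 0 <= th <= PI -> th < theta_plus l1 c ->
  l1 ^ 2 * (1 - cos th) < c ^ 2.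
Proof.
  intros Hl1 Hc Hth Hlt.
  pose proof (COS_bound th) as Hcos.
  assert (Hsqrt2 : 0 <= sqrt 2 * l1) by (pose proof (sqrt_pos 2); nra).
  assert (Hsq : (sqrt 2 * l1) ^ 2 = 2 * l1 ^ 2)
    by (rewrite Rpow_mult_distr, pow2_sqrt; lra).
  unfold theta_plus in Hlt. destruct (Rlt_dec (sqrt 2 * l1) c) as [Hbig | Hsmall].
  - nra.
  - apply Rnot_lt_le in Hsmall.
    assert (Hc2 : c ^ 2 <= 2 * l1 ^ 2) by (rewrite <- Hsq; apply pow_incr; lra).
    assert (Hl1sq : 0 < l1 ^ 2) by (apply pow2_gt_0; lra).
    assert (Hq : c ^ 2 / l1 ^ 2 * l1 ^ 2 = c ^ 2) by (field; lra).
    set (q := c ^ 2 / l1 ^ 2) in *.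
    assert (Hx : -1 <= 1 - q <= 1) by (pose proof (pow2_ge_0 c); split; nra).
    assert (Hacos : 1 - q < cos th).
    { rewrite <- (cos_acos (1 - q) Hx). pose proof (acos_bound (1 - q)).
      apply cos_decreasing_1; lra. }
    nra.
Qed.

Definition Xmap_period (l1 l2 c th : R) (phi : R -> R) (U : R) : C :=
  (2 * U, - 2 * ff l1 l2 c th phi U / c).

Section Periodicity.

Variables (l1 l2 c th : R) (phi : R -> R) (U : R).
Hypotheses (Hl2 : 0 < l2) (Hl12 : l2 ^ 2 <= l1 ^ 2) (Hc : 0 < c)
  (Hcone : l1 ^ 2 * (1 - cos th) < c ^ 2)
  (Hphi : is_phi l1 l2 c th phi) (HphiU : phi U = PI).

Let F := phid_angle l1 l2 c th.

Lemma phid_angle_pos p : 0 < F p.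
Proof. apply sqrt_lt_R0, Q_angle_pos; auto; lra. Qed.

Lemma phid_angle_continuous p : continuous F p.
Proof.
  apply (@ex_derive_continuous R_AbsRing R_NormedModule).
  pose proof (Q_angle_pos l1 l2 c th p ltac:(lra) Hl2 Hl12 Hcone) as HQ.
  unfold F, phid_angle, Q_angle, B_angle in *.
  auto_derive. simpl in *. lra.
Qed.

Lemma phi_add_U u : phi (u + U) = phi u + PI.
Proof.
  destruct Hphi as [Hphi0 Hphid].
  apply (autonomous_ode_shift F phid_angle_pos phid_angle_continuous).
  - apply phid_angle_add_PI.
  - exact Hphid.
  - rewrite HphiU, Hphi0. ring.
Qed.

Lemma Bf_add_U u : Bf l1 l2 phi (u + U) = Bf l1 l2 phi u.
Proof.
  change (B_angle l1 l2 (phi (u + U)) = B_angle l1 l2 (phi u)).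
  rewrite phi_add_U. apply B_angle_add_PI.
Qed.

Lemma phid_add_U u : phid l1 l2 c th phi (u + U) = phid l1 l2 c th phi u.
Proof.
  change (F (phi (u + U)) = F (phi u)).
  rewrite phi_add_U. apply phid_angle_add_PI.
Qed.

Lemma ff_add_U u : ff l1 l2 c th phi (u + U) = ff l1 l2 c th phi u + ff l1 l2 c th phi U.
Proof.
  apply RInt_0_add_period.
  - intro s. apply (@ex_derive_continuous R_AbsRing R_NormedModule).
    assert (ex_derive phi s) by (eexists; apply Hphi).
    unfold Bf. auto_derive. auto.
  - intro s. unfold ffd. rewrite Bf_add_U. reflexivity.
Qed.

Lemma GG_add_U u : GG l1 l2 c th phi (u + U) = GG l1 l2 c th phi u + GG l1 l2 c th phi U.
Proof.
  apply RInt_0_add_period.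
  - intro s. apply (continuous_comp phi (fun p => (c - F p) / B_angle l1 l2 p)).
    + apply (@ex_derive_continuous R_AbsRing R_NormedModule). eexists; apply Hphi.
    + apply (@ex_derive_continuous R_AbsRing R_NormedModule).
      pose proof (Q_angle_pos l1 l2 c th (phi s) ltac:(lra) Hl2 Hl12 Hcone).
      pose proof (B_angle_bounds l1 l2 (phi s) Hl2 Hl12).
      unfold F, phid_angle, Q_angle, B_angle in *.
      auto_derive. simpl in *. repeat split; lra.
  - intro s. rewrite phid_add_U, Bf_add_U. reflexivity.
Qed.

Lemma Xmap_add_period :
  HH l1 l2 c th phi U = 0 ->
  forall z, Xmap l1 l2 c th phi (z + Xmap_period l1 l2 c th phi U)%C = Xmap l1 l2 c th phi z.
Proof.
  intros HH0 [u v].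
  assert (E2 : u + 2 * U = u + U + U) by ring.
  assert (HB2 : Bf l1 l2 phi (u + 2 * U) = Bf l1 l2 phi u) by (rewrite E2, !Bf_add_U; auto).
  assert (Hpd2 : phid l1 l2 c th phi (u + 2 * U) = phid l1 l2 c th phi u)
    by (rewrite E2, !phid_add_U; auto).
  assert (Hff2 : ff l1 l2 c th phi (u + 2 * U) = ff l1 l2 c th phi u + 2 * ff l1 l2 c th phi U)
    by (rewrite E2, !ff_add_U; ring).
  assert (HGG2 : GG l1 l2 c th phi (u + 2 * U) = GG l1 l2 c th phi u + 2 * GG l1 l2 c th phi U)
    by (rewrite E2, !GG_add_U; ring).
  assert (Hcos2 : cos (phi (u + 2 * U)) = cos (phi u))
    by (rewrite E2, !phi_add_U, !neg_cos; ring).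
  assert (Hsin2 : sin (phi (u + 2 * U)) = sin (phi u))
    by (rewrite E2, !phi_add_U, !neg_sin; ring).
  unfold Xmap, Xmap_period, ffd. cbn [fst snd Cplus].
  rewrite HB2, Hpd2, Hff2, HGG2, Hcos2, Hsin2.
  unfold HH in HH0.
  set (f := ff l1 l2 c th phi) in *. set (G := GG l1 l2 c th phi) in *.
  set (D := Dc c th) in *.
  (* both [x3] and [A] are unchanged; for [x3] this is exactly [H(c, theta) = 0] *)
  replace (- l1 * l2 * D * (v + -2 * f U / c) + l1 * l2 * (G u + 2 * G U))
    with (- l1 * l2 * D * v + l1 * l2 * G u + 2 * l1 * l2 / c * (D * f U + c * G U))
    by (field; lra).
  replace (f u + 2 * f U + c * (v + -2 * f U / c)) with (f u + c * v) by (field; lra).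
  rewrite HH0, Rmult_0_r, Rplus_0_r. reflexivity.
Qed.

End Periodicity.

Theorem theorem5p2 (l1 l2 c th : R) (phi : R -> R) (U : R) :
  ((l1 > l2 /\ l2 > 0) \/ (l1 = 1 /\ l2 = 1)) ->
  0 < c ->
  0 < th -> th < PI / 2 -> th < theta_plus l1 c ->
  is_phi l1 l2 c th phi ->
  0 < U -> phi U = PI ->
  HH l1 l2 c th phi U = 0 ->
  exists Z : C, Z <> 0%C /\
    forall z : C, Xmap l1 l2 c th phi (z + Z)%C = Xmap l1 l2 c th phi z.
Proof.
  intros Hl Hc Hth0 Hth1 Hthp Hphi HU HphiU HH0.
  assert (Hl12 : 0 < l1 /\ 0 < l2 /\ l2 ^ 2 <= l1 ^ 2)
    by (destruct Hl as [[? ?] | [-> ->]]; repeat split; nra).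
  destruct Hl12 as (Hl1 & Hl2 & Hl12).
  assert (Hcone : l1 ^ 2 * (1 - cos th) < c ^ 2)
    by (apply theta_plus_bound; auto; pose proof PI_RGT_0; lra).
  exists (Xmap_period l1 l2 c th phi U). split.
  - intro H0. injection H0. lra.
  - apply Xmap_add_period; auto.
Qed.
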